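(* Let $I\subset\mathbb{R}$ be an open interval and let $f:I\to\mathbb{R}$ be a strictly convex function of class $C^{3}$ (i.e. $f''>0$ on $I$), with graph $X$. Then $f$ is a quadratic polynomial if and only if $X$ satisfies the following Condition (A): there is a positive constant $a$, depending only on $X$, such that for every point $P$ on $X$ and every chord $AB$ of $X$ parallel to the tangent line of $X$ at $P$, if $V$ denotes the point where the line through $P$ parallel to the $y$-axis meets the segment $AB$, then the area of the region bounded by $X$ and the chord $AB$ equals $a\,|PV|^{3/2}$.
   Context: A chord $AB$ of $X$ is a segment joining two points $A,B$ of $X$; the ''region bounded by $X$ and $AB$'' is the region enclosed by the arc of $X$ between $A$ and $B$ and the segment $AB$. $|PV|$ denotes the Euclidean length of the segment $PV$. *)

From Stdlib Require Import Reals.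
From Coquelicot Require Import Coquelicot.
Open Scope R_scope.

Definition in_open_interval (lo hi : Rbar) (x : R) : Prop :=
  Rbar_lt lo x /\ Rbar_lt x hi.

Definition C3_on (I : R -> Prop) (f : R -> R) : Prop :=
  (forall k, (k <= 3)%nat -> forall x, I x -> ex_derive_n f k x) /\
  (forall x, I x -> continuous (Derive_n f 3) x).

Definition chord (f : R -> R) (x1 x2 x : R) : R :=
  f x1 + (f x2 - f x1) / (x2 - x1) * (x - x1).

Definition segment_area (f : R -> R) (x1 x2 : R) : R :=
  RInt (fun x => Rabs (chord f x1 x2 x - f x)) x1 x2.

(* Condition (A) for the graph X of f over I. P = (p, f p), V = (p, chord p),
   |PV| = |chord p - f p|, and |PV|^(3/2) = sqrt (|PV|^3). *)
Definition conditionA (I : R -> Prop) (f : R -> R) : Prop :=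
  exists a : R, 0 < a /\
    forall p x1 x2 : R,
      I p -> I x1 -> I x2 -> x1 < x2 ->
      f x2 - f x1 = Derive f p * (x2 - x1) ->
      (* the vertical line through P meets the segment AB *)
      x1 <= p <= x2 ->
      segment_area f x1 x2 = a * sqrt (Rabs (chord f x1 x2 p - f p) ^ 3).

Definition quadratic_on (I : R -> Prop) (f : R -> R) : Prop :=
  exists c2 c1 c0 : R, forall x, I x -> f x = c2 * x ^ 2 + c1 * x + c0.

From Stdlib Require Import Reals Lra Lia Psatz.
From Coquelicot Require Import Coquelicot.
Open Scope R_scope.

(* Near a point where f'' is close to m, take a short chord and, by the mean value
   theorem, a point q where the tangent is parallel to it.  With t the height of the
   chord above q, the gap between chord and graph is t minus the Taylor remainder at q,
   so it is squeezed between the parabolic caps t - (m/2 -+ e) (x - q)^2.  A cap of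
   height t under k u^2 has area (4/3) t^(3/2) / sqrt k, so Condition (A), which says
   the area is a t^(3/2), forces a sqrt (f''/2) = 4/3 everywhere: f'' is constant and
   f is quadratic.  For a parabola the squeeze is an equality, which gives (A). *)

Lemma mvt_between (g dg : R -> R) a b :
  (forall z, Rmin a b <= z <= Rmax a b -> is_derive g z (dg z)) ->
  exists c, Rmin a b <= c <= Rmax a b /\ g b - g a = dg c * (b - a).
Proof.
  intros Hd. apply MVT_gen.
  - intros z Hz; apply Hd; lra.
  - intros z Hz. apply continuity_pt_filterlim, (ex_derive_continuous g).
    exists (dg z); auto.
Qed.

Lemma between_in_segment x1 x2 a b z :
  x1 <= a <= x2 -> x1 <= b <= x2 -> Rmin a b <= z <= Rmax a b -> x1 <= z <= x2.
Proof. unfold Rmin, Rmax; destruct (Rle_dec a b); lra. Qed.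

Lemma ball_Rabs (x e y : R) : ball x e y <-> Rabs (y - x) < e.
Proof. reflexivity. Qed.

Lemma locally_segment (P : R -> Prop) p :
  locally p P -> exists x1 x2, x1 < x2 /\ forall z, x1 <= z <= x2 -> P z.
Proof.
  intros [d Hd]. pose proof (cond_pos d).
  exists (p - d / 2), (p + d / 2). split; [lra|].
  intros z Hz. apply Hd, (proj2 (ball_Rabs _ _ _)), Rabs_def1; lra.
Qed.

Lemma eq_of_squeeze x c :
  0 < x -> (forall k K, 0 < k -> k < x -> x < K -> k <= c <= K) -> c = x.
Proof.
  intros Hx Hsq. destruct (Rtotal_order c x) as [Hlt | [Heq | Hgt]]; auto.
  - destruct (Hsq ((Rmax c 0 + x) / 2) (x + 1)) as [Hle _];
      unfold Rmax in *; destruct (Rle_dec c 0); lra.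
  - destruct (Hsq (x / 2) ((x + c) / 2)); lra.
Qed.

Lemma is_RInt_parabola k r q a b :
  is_RInt (fun x => k * (r ^ 2 - (x - q) ^ 2)) a b
    (k * (r ^ 2 * (b - a) - ((b - q) ^ 3 - (a - q) ^ 3) / 3)).
Proof.
  set (F := fun x => k * (r ^ 2 * x - (x - q) ^ 3 / 3)).
  replace (k * (r ^ 2 * (b - a) - ((b - q) ^ 3 - (a - q) ^ 3) / 3))
    with (minus (F b) (F a)) by (unfold F, minus, plus, opp; simpl; field).
  apply (is_RInt_derive (V := R_CompleteNormedModule)).
  - intros x _. unfold F. auto_derive; [auto|]. f_equal. field.
  - intros x _. apply (ex_derive_continuous (fun x => k * (r ^ 2 - (x - q) ^ 2))).
    auto_derive; auto.
Qed.

Lemma RInt_parabola_cap k r q :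
  RInt (fun x => k * (r ^ 2 - (x - q) ^ 2)) (q - r) (q + r) = 4 / 3 * k * r ^ 3 :> R.
Proof. rewrite (is_RInt_unique _ _ _ _ (is_RInt_parabola k r q _ _)). field. Qed.

Lemma RInt_parabola_le_cap k r q a b :
  0 <= k -> q - r <= a <= q -> q <= b <= q + r ->
  RInt (fun x => k * (r ^ 2 - (x - q) ^ 2)) a b <= 4 / 3 * k * r ^ 3.
Proof.
  intros Hk Ha Hb. rewrite (is_RInt_unique _ _ _ _ (is_RInt_parabola k r q _ _)).
  (* [r^2 u - u^3/3 <= 2/3 r^3] for [0 <= u <= r], as [(r - u)^2 (2 r + u) >= 0] *)
  assert (Hu : 0 <= (r - (q - a)) ^ 2 * (2 * r + (q - a))) by (apply Rmult_le_pos; nra).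
  assert (Hv : 0 <= (r - (b - q)) ^ 2 * (2 * r + (b - q))) by (apply Rmult_le_pos; nra).
  assert (E : 4 / 3 * k * r ^ 3 - k * (r ^ 2 * (b - a) - ((b - q) ^ 3 - (a - q) ^ 3) / 3)
    = k / 3 * ((r - (q - a)) ^ 2 * (2 * r + (q - a)) + (r - (b - q)) ^ 2 * (2 * r + (b - q))))
    by field.
  assert (0 <= k / 3 * ((r - (q - a)) ^ 2 * (2 * r + (q - a)) + (r - (b - q)) ^ 2 * (2 * r + (b - q))))
    by (apply Rmult_le_pos; lra).
  lra.
Qed.

Lemma RInt_le_of_subinterval (g : R -> R) a b u v :
  a <= u -> u <= v -> v <= b ->
  (forall c d, a <= c -> c <= d -> d <= b -> ex_RInt g c d) ->
  (forall x, a <= x <= b -> 0 <= g x) ->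
  RInt g u v <= RInt g a b.
Proof.
  intros Hau Huv Hvb Hint Hpos.
  rewrite <- (RInt_Chasles g a u b), <- (RInt_Chasles g u v b) by (apply Hint; lra).
  assert (0 <= RInt g a u) by (apply RInt_ge_0; [lra | apply Hint; lra | intros; apply Hpos; lra]).
  assert (0 <= RInt g v b) by (apply RInt_ge_0; [lra | apply Hint; lra | intros; apply Hpos; lra]).
  unfold plus; simpl; lra.
Qed.

(* [sqrt t / sqrt k] is the half-width of the cap of height [t] under [k u^2]. *)
Lemma cap_radius t k : 0 <= t -> 0 < k ->
  k * (sqrt t / sqrt k) ^ 2 = t /\
  4 / 3 * k * (sqrt t / sqrt k) ^ 3 = 4 / (3 * sqrt k) * sqrt (Rabs t ^ 3).
Proof.
  intros Ht Hk.
  assert (Hsk : 0 < sqrt k) by (apply sqrt_lt_R0; lra).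
  assert (Ek : sqrt k * sqrt k = k) by (apply sqrt_sqrt; lra).
  assert (Et : sqrt t * sqrt t = t) by (apply sqrt_sqrt; lra).
  assert (E3 : sqrt (Rabs t ^ 3) = sqrt t ^ 3).
  { rewrite Rabs_pos_eq by lra. rewrite <- Et at 1.
    replace ((sqrt t * sqrt t) ^ 3) with ((sqrt t ^ 3) ^ 2) by ring.
    apply sqrt_pow2, pow_le, sqrt_pos. }
  rewrite E3. set (sk := sqrt k) in *. set (st := sqrt t) in *.
  split; rewrite <- Ek; [rewrite <- Et|]; field; lra.
Qed.

Section Segment.

Variables (f : R -> R) (x1 x2 : R).
Hypothesis x1_lt_x2 : x1 < x2.
Hypothesis derivable_on_segment :
  forall z, x1 <= z <= x2 -> ex_derive f z /\ ex_derive (Derive f) z.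

Lemma taylor_remainder_sign q y k :
  x1 <= q <= x2 -> x1 <= y <= x2 ->
  exists d, x1 <= d <= x2 /\ exists w, 0 <= w /\
    f y - f q - Derive f q * (y - q) - k * (y - q) ^ 2 = (Derive (Derive f) d - 2 * k) * w.
Proof.
  intros Hq Hy.
  destruct (mvt_between (fun z => f z - f q - Derive f q * (z - q) - k * (z - q) ^ 2)
              (fun z => Derive f z - Derive f q - 2 * k * (z - q)) q y) as [c [Hc Ec]].
  { intros z Hz. destruct (derivable_on_segment z) as [Dz _].
    { exact (between_in_segment _ _ _ _ _ Hq Hy Hz). }
    auto_derive; [exact Dz|]. change (fun x : R => f x) with f. ring. }
  assert (Hc12 : x1 <= c <= x2) by exact (between_in_segment _ _ _ _ _ Hq Hy Hc).
  destruct (mvt_between (Derive f) (Derive (Derive f)) q c) as [d [Hd Ed]].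
  { intros z Hz. apply Derive_correct, derivable_on_segment.
    exact (between_in_segment _ _ _ _ _ Hq Hc12 Hz). }
  exists d. split; [exact (between_in_segment _ _ _ _ _ Hq Hc12 Hd)|].
  exists ((c - q) * (y - q)). split.
  - unfold Rmin, Rmax in Hc. destruct (Rle_dec q y); nra.
  - rewrite Ed in Ec. lra.
Qed.

Lemma taylor_remainder_lower q y k :
  x1 <= q <= x2 -> x1 <= y <= x2 ->
  (forall z, x1 <= z <= x2 -> 2 * k <= Derive (Derive f) z) ->
  k * (y - q) ^ 2 <= f y - f q - Derive f q * (y - q).
Proof.
  intros Hq Hy Hk. destruct (taylor_remainder_sign q y k Hq Hy) as [d [Hd [w [Hw E]]]].
  assert (0 <= (Derive (Derive f) d - 2 * k) * w)
    by (apply Rmult_le_pos; [specialize (Hk d Hd); lra | exact Hw]).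
  lra.
Qed.

Lemma taylor_remainder_upper q y K :
  x1 <= q <= x2 -> x1 <= y <= x2 ->
  (forall z, x1 <= z <= x2 -> Derive (Derive f) z <= 2 * K) ->
  f y - f q - Derive f q * (y - q) <= K * (y - q) ^ 2.
Proof.
  intros Hq Hy HK. destruct (taylor_remainder_sign q y K Hq Hy) as [d [Hd [w [Hw E]]]].
  assert ((Derive (Derive f) d - 2 * K) * w <= 0)
    by (apply Rmult_le_0_r; [specialize (HK d Hd); lra | exact Hw]).
  lra.
Qed.

Lemma chord_endpoints : chord f x1 x2 x1 = f x1 /\ chord f x1 x2 x2 = f x2.
Proof. unfold chord; split; [ring | field; lra]. Qed.

(* Combine the tangent-line bounds at x for the values at x1 and x2. *)
Lemma chord_above_graph :
  (forall z, x1 <= z <= x2 -> 0 <= Derive (Derive f) z) ->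
  forall x, x1 <= x <= x2 -> f x <= chord f x1 x2 x.
Proof.
  intros Hconv x Hx.
  assert (T1 := taylor_remainder_lower x x1 0 Hx ltac:(lra) ltac:(intros; rewrite Rmult_0_r; auto)).
  assert (T2 := taylor_remainder_lower x x2 0 Hx ltac:(lra) ltac:(intros; rewrite Rmult_0_r; auto)).
  assert (Hcomb : (x2 - x1) * f x <= (x2 - x) * f x1 + (x - x1) * f x2) by nra.
  replace (chord f x1 x2 x) with (((x2 - x) * f x1 + (x - x1) * f x2) / (x2 - x1))
    by (unfold chord; field; lra).
  apply Rmult_le_reg_r with (x2 - x1); [lra|].
  unfold Rdiv; rewrite Rmult_assoc, Rinv_l by lra. lra.
Qed.

Lemma ex_RInt_chord_gap u v :
  x1 <= u -> u <= v -> v <= x2 ->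
  ex_RInt (fun x => Rabs (chord f x1 x2 x - f x)) u v.
Proof.
  intros Hu Huv Hv. apply (ex_RInt_continuous (V := R_CompleteNormedModule)).
  intros z Hz. rewrite Rmin_left, Rmax_right in Hz by lra.
  apply continuous_Rabs_comp, (ex_derive_continuous (fun x => chord f x1 x2 x - f x)).
  destruct (derivable_on_segment z) as [Dz _]; [lra|].
  unfold chord. auto_derive; auto.
Qed.

Section Tangent.

Variable q : R.
Hypothesis q_in_segment : x1 <= q <= x2.
Hypothesis chord_parallel_tangent : f x2 - f x1 = Derive f q * (x2 - x1).

Lemma chord_gap_eq y :
  chord f x1 x2 y - f y =
  (chord f x1 x2 q - f q) - (f y - f q - Derive f q * (y - q)).
Proof.
  unfold chord.
  replace ((f x2 - f x1) / (x2 - x1)) with (Derive f q)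
    by (rewrite chord_parallel_tangent; field; lra).
  ring.
Qed.

Lemma tangent_remainder_endpoints :
  f x1 - f q - Derive f q * (x1 - q) = chord f x1 x2 q - f q /\
  f x2 - f q - Derive f q * (x2 - q) = chord f x1 x2 q - f q.
Proof.
  destruct chord_endpoints as [E1 E2].
  pose proof (chord_gap_eq x1). pose proof (chord_gap_eq x2). lra.
Qed.

Lemma chord_height_pos k :
  0 < k -> (forall z, x1 <= z <= x2 -> 2 * k <= Derive (Derive f) z) ->
  0 < chord f x1 x2 q - f q.
Proof.
  intros Hk Hcurv. destruct tangent_remainder_endpoints as [E1 E2].
  pose proof (taylor_remainder_lower q x1 k q_in_segment ltac:(lra) Hcurv).
  pose proof (taylor_remainder_lower q x2 k q_in_segment ltac:(lra) Hcurv).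
  destruct (Req_dec q x1) as [->|Hq].
  - assert (0 < (x2 - x1) ^ 2) by (apply pow_lt; lra). nra.
  - assert (0 < (x1 - q) ^ 2) by (apply pow2_gt_0; lra). nra.
Qed.

Lemma segment_area_le k :
  0 < k -> (forall z, x1 <= z <= x2 -> 2 * k <= Derive (Derive f) z) ->
  segment_area f x1 x2 <= 4 / (3 * sqrt k) * sqrt (Rabs (chord f x1 x2 q - f q) ^ 3).
Proof.
  intros Hk Hcurv.
  pose proof (chord_height_pos k Hk Hcurv) as Ht.
  destruct tangent_remainder_endpoints as [E1 E2].
  set (t := chord f x1 x2 q - f q) in *.
  destruct (cap_radius t k) as [Hr2 Hr3]; [lra | lra |].
  rewrite <- Hr3. set (r := sqrt t / sqrt k) in *.
  assert (Hr : 0 <= r) by (apply Rle_mult_inv_pos; [apply sqrt_pos | apply sqrt_lt_R0; lra]).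
  pose proof (taylor_remainder_lower q x1 k q_in_segment ltac:(lra) Hcurv).
  pose proof (taylor_remainder_lower q x2 k q_in_segment ltac:(lra) Hcurv).
  assert (Hx1 : q - x1 <= r).
  { apply Rsqr_incr_0_var; [|lra]. unfold Rsqr.
    enough ((x1 - q) ^ 2 <= r ^ 2) by nra. apply Rmult_le_reg_l with k; lra. }
  assert (Hx2 : x2 - q <= r).
  { apply Rsqr_incr_0_var; [|lra]. unfold Rsqr.
    enough ((x2 - q) ^ 2 <= r ^ 2) by nra. apply Rmult_le_reg_l with k; lra. }
  eapply Rle_trans; [| apply (RInt_parabola_le_cap k r q x1 x2); lra].
  apply RInt_le; [lra | apply ex_RInt_chord_gap; lra |
    exact (ex_intro _ _ (is_RInt_parabola k r q x1 x2)) |].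
  intros x Hx.
  assert (Habove := chord_above_graph ltac:(intros z Hz; specialize (Hcurv z Hz); lra) x ltac:(lra)).
  pose proof (taylor_remainder_lower q x k q_in_segment ltac:(lra) Hcurv).
  rewrite Rabs_pos_eq, chord_gap_eq by lra. fold t. lra.
Qed.

Lemma segment_area_ge K :
  0 < K -> (forall z, x1 <= z <= x2 -> Derive (Derive f) z <= 2 * K) ->
  0 <= chord f x1 x2 q - f q ->
  4 / (3 * sqrt K) * sqrt (Rabs (chord f x1 x2 q - f q) ^ 3) <= segment_area f x1 x2.
Proof.
  intros HK Hcurv Ht.
  destruct tangent_remainder_endpoints as [E1 E2].
  set (t := chord f x1 x2 q - f q) in *.
  destruct (cap_radius t K) as [Hr2 Hr3]; [lra | lra |].
  rewrite <- Hr3. set (r := sqrt t / sqrt K) in *.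
  assert (Hr : 0 <= r) by (apply Rle_mult_inv_pos; [apply sqrt_pos | apply sqrt_lt_R0; lra]).
  pose proof (taylor_remainder_upper q x1 K q_in_segment ltac:(lra) Hcurv).
  pose proof (taylor_remainder_upper q x2 K q_in_segment ltac:(lra) Hcurv).
  assert (Hleft : r <= q - x1).
  { apply Rsqr_incr_0_var; [|lra]. unfold Rsqr.
    enough (r ^ 2 <= (x1 - q) ^ 2) by nra. apply Rmult_le_reg_l with K; lra. }
  assert (Hright : r <= x2 - q).
  { apply Rsqr_incr_0_var; [|lra]. unfold Rsqr.
    enough (r ^ 2 <= (x2 - q) ^ 2) by nra. apply Rmult_le_reg_l with K; lra. }
  rewrite <- (RInt_parabola_cap K r q).
  eapply Rle_trans; [| apply (RInt_le_of_subinterval _ x1 x2 (q - r) (q + r)); try lra].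
  - apply RInt_le; [lra | exact (ex_intro _ _ (is_RInt_parabola K r q _ _)) |
      apply ex_RInt_chord_gap; lra |].
    intros x Hx.
    pose proof (taylor_remainder_upper q x K q_in_segment ltac:(lra) Hcurv).
    rewrite chord_gap_eq. fold t.
    eapply Rle_trans; [| apply Rle_abs]. lra.
  - exact ex_RInt_chord_gap.
  - intros; apply Rabs_pos.
Qed.

End Tangent.

End Segment.

Section OpenInterval.

Variables lo hi : Rbar.
Local Notation I := (in_open_interval lo hi).

Lemma in_open_interval_inhabited : Rbar_lt lo hi -> exists x, I x.
Proof.
  unfold in_open_interval.
  destruct lo as [l| |], hi as [h| |]; simpl; intros Hlh; try contradiction.
  - exists ((l + h) / 2); simpl; lra.
  - exists (l + 1); simpl; lra.
  - exists (h - 1); simpl; lra.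
  - exists 0; simpl; auto.
Qed.

Lemma in_open_interval_locally x : I x -> locally x I.
Proof.
  apply (open_and (fun u : R => Rbar_lt lo u) (fun u : R => Rbar_lt u hi));
    [apply open_Rbar_gt | apply open_Rbar_lt].
Qed.

Lemma in_open_interval_between a b y : I a -> I b -> a <= y <= b -> I y.
Proof.
  unfold in_open_interval.
  destruct lo as [l| |], hi as [h| |]; simpl; intros; try tauto; lra.
Qed.

Lemma constant_of_derive_zero (g : R -> R) :
  (forall x, I x -> is_derive g x 0) -> forall x y, I x -> I y -> g x = g y.
Proof.
  intros Hg x y Ix Iy.
  destruct (mvt_between g (fun _ => 0) x y) as [c [_ Hc]]; [|lra].
  intros z Hz. apply Hg, (in_open_interval_between (Rmin x y) (Rmax x y)); auto;
    unfold Rmin, Rmax; destruct (Rle_dec x y); auto.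
Qed.

Lemma second_derivative_quadratic (f : R -> R) c2 c1 c0 :
  (forall x, I x -> f x = c2 * x ^ 2 + c1 * x + c0) ->
  forall x, I x -> Derive (Derive f) x = 2 * c2.
Proof.
  intros Hf.
  assert (Hf' : forall x, I x -> Derive f x = 2 * c2 * x + c1).
  { intros x Ix.
    rewrite (Derive_ext_loc f (fun x => c2 * x ^ 2 + c1 * x + c0)).
    - apply is_derive_unique. auto_derive; auto. ring.
    - exact (filter_imp _ _ Hf (in_open_interval_locally x Ix)). }
  intros x Ix.
  rewrite (Derive_ext_loc (Derive f) (fun x => 2 * c2 * x + c1)).
  - apply is_derive_unique. auto_derive; auto. ring.
  - exact (filter_imp _ _ Hf' (in_open_interval_locally x Ix)).
Qed.

Section Function.

Variable f : R -> R.
Hypothesis derivable_f : forall x, I x -> ex_derive f x.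
Hypothesis derivable_f' : forall x, I x -> ex_derive (Derive f) x.
Hypothesis convex_f : forall x, I x -> 0 < Derive (Derive f) x.

Lemma derivable_on_subsegment x1 x2 :
  I x1 -> I x2 -> forall z, x1 <= z <= x2 -> ex_derive f z /\ ex_derive (Derive f) z.
Proof.
  intros I1 I2 z Hz.
  split; [apply derivable_f | apply derivable_f'];
    exact (in_open_interval_between x1 x2 z I1 I2 Hz).
Qed.

Lemma quadratic_of_second_derivative_const M :
  (exists x, I x) -> (forall x, I x -> Derive (Derive f) x = M) -> quadratic_on I f.
Proof.
  intros [x0 I0] Hf''.
  set (B := Derive f x0 - M * x0).
  assert (Hf' : forall x, I x -> Derive f x = M * x + B).
  { intros x Ix.
    assert (E := constant_of_derive_zero (fun x => Derive f x - M * x)).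
    enough (Derive f x - M * x = Derive f x0 - M * x0) by (unfold B; lra).
    apply E; auto. intros y Iy. auto_derive; [auto|].
    rewrite Hf'' by auto. ring. }
  exists (M / 2), B, (f x0 - M / 2 * x0 ^ 2 - B * x0). intros x Ix.
  enough (f x - M / 2 * x ^ 2 - B * x = f x0 - M / 2 * x0 ^ 2 - B * x0) by lra.
  apply (constant_of_derive_zero (fun x => f x - M / 2 * x ^ 2 - B * x)); auto.
  intros y Iy. auto_derive; [auto|]. change (fun x : R => f x) with f.
  rewrite Hf' by auto. field.
Qed.

Lemma conditionA_of_quadratic :
  (exists x, I x) -> quadratic_on I f -> conditionA I f.
Proof.
  intros [x0 I0] [c2 [c1 [c0 Hf]]].
  pose proof (second_derivative_quadratic f c2 c1 c0 Hf) as Hf''.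
  assert (Hc2 : 0 < c2)
    by (pose proof (convex_f x0 I0) as Hpos; rewrite Hf'' in Hpos by exact I0; lra).
  exists (4 / (3 * sqrt c2)). split.
  { apply Rdiv_lt_0_compat; [lra|]. pose proof (sqrt_lt_R0 c2 Hc2). lra. }
  intros p x1 x2 Ip I1 I2 H12 Hpar Hp.
  pose proof (derivable_on_subsegment x1 x2 I1 I2) as Hder.
  assert (Hcurv : forall z, x1 <= z <= x2 -> Derive (Derive f) z = 2 * c2)
    by (intros z Hz; apply Hf'', (in_open_interval_between x1 x2); auto).
  apply Rle_antisym.
  - apply (segment_area_le f x1 x2 H12 Hder p Hp Hpar c2 Hc2).
    intros z Hz; rewrite Hcurv; lra.
  - apply (segment_area_ge f x1 x2 H12 Hder p Hp Hpar c2 Hc2).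
    + intros z Hz; rewrite Hcurv; lra.
    + apply Rlt_le, (chord_height_pos f x1 x2 H12 Hder p Hp Hpar c2 Hc2).
      intros z Hz; rewrite Hcurv; lra.
Qed.

Hypothesis derivable_f'' : forall x, I x -> ex_derive (Derive (Derive f)) x.

Lemma second_derivative_locally_between p k K :
  I p -> 2 * k < Derive (Derive f) p < 2 * K ->
  locally p (fun y => I y /\ 2 * k < Derive (Derive f) y < 2 * K).
Proof.
  intros Ip HkK. apply filter_and; [exact (in_open_interval_locally p Ip)|].
  set (m := Derive (Derive f) p) in *.
  assert (Heps : 0 < Rmin (m - 2 * k) (2 * K - m)) by (apply Rmin_pos; lra).
  apply (filter_imp (fun y => ball m (mkposreal _ Heps) (Derive (Derive f) y))).
  - intros y Hy. apply (proj1 (ball_Rabs _ _ _)), Rabs_def2 in Hy. simpl in Hy.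
    pose proof (Rmin_l (m - 2 * k) (2 * K - m)).
    pose proof (Rmin_r (m - 2 * k) (2 * K - m)). lra.
  - exact (ex_derive_continuous _ p (derivable_f'' p Ip) _ (locally_ball _ _)).
Qed.

Lemma conditionA_curvature_bounds :
  conditionA I f -> exists a, 0 < a /\
    forall p k K, I p -> 0 < k -> 2 * k < Derive (Derive f) p < 2 * K ->
    a * sqrt k <= 4 / 3 <= a * sqrt K.
Proof.
  intros [a [Ha HA]]. exists a. split; [exact Ha|].
  intros p k K Ip Hk HkK.
  destruct (locally_segment _ p (second_derivative_locally_between p k K Ip HkK))
    as [x1 [x2 [H12 Hseg]]].
  assert (I1 : I x1) by (apply Hseg; lra).
  assert (I2 : I x2) by (apply Hseg; lra).
  pose proof (derivable_on_subsegment x1 x2 I1 I2) as Hder.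
  destruct (mvt_between f (Derive f) x1 x2) as [q [Hq Hpar]].
  { intros z Hz. rewrite Rmin_left, Rmax_right in Hz by lra. apply Derive_correct, Hder, Hz. }
  rewrite Rmin_left, Rmax_right in Hq by lra.
  assert (Hlow : forall z, x1 <= z <= x2 -> 2 * k <= Derive (Derive f) z)
    by (intros z Hz; specialize (Hseg z Hz); lra).
  assert (Hup : forall z, x1 <= z <= x2 -> Derive (Derive f) z <= 2 * K)
    by (intros z Hz; specialize (Hseg z Hz); lra).
  pose proof (chord_height_pos f x1 x2 H12 Hder q Hq Hpar k Hk Hlow) as Ht.
  pose proof (segment_area_le f x1 x2 H12 Hder q Hq Hpar k Hk Hlow) as Harea_le.
  pose proof (segment_area_ge f x1 x2 H12 Hder q Hq Hpar K ltac:(lra) Hup ltac:(lra)) as Harea_ge.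
  rewrite (HA q x1 x2 (proj1 (Hseg q Hq)) I1 I2 H12 Hpar Hq) in Harea_le, Harea_ge.
  set (V := sqrt (Rabs (chord f x1 x2 q - f q) ^ 3)) in *.
  assert (HV : 0 < V) by (apply sqrt_lt_R0, pow_lt, Rabs_pos_lt; lra).
  apply Rmult_le_reg_r in Harea_le, Harea_ge; auto.
  assert (Hsk : 0 < sqrt k) by (apply sqrt_lt_R0; lra).
  assert (HsK : 0 < sqrt K) by (apply sqrt_lt_R0; lra).
  split.
  - replace (4 / 3) with (4 / (3 * sqrt k) * sqrt k) by (field; lra).
    apply Rmult_le_compat_r; lra.
  - replace (4 / 3) with (4 / (3 * sqrt K) * sqrt K) by (field; lra).
    apply Rmult_le_compat_r; lra.
Qed.

Lemma conditionA_constant_curvature :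
  conditionA I f -> exists M, forall p, I p -> Derive (Derive f) p = M.
Proof.
  intros HA. destruct (conditionA_curvature_bounds HA) as [a [Ha Hbounds]].
  exists (2 * (4 / (3 * a)) ^ 2). intros p Ip.
  enough ((4 / (3 * a)) ^ 2 = Derive (Derive f) p / 2) by lra.
  apply eq_of_squeeze; [specialize (convex_f p Ip); lra|].
  intros k K Hk HkM HMK.
  destruct (Hbounds p k K Ip Hk ltac:(lra)) as [Hak HaK].
  assert (Ec : a * (4 / (3 * a)) = 4 / 3) by (field; lra).
  split.
  - rewrite <- (pow2_sqrt k) by lra. apply pow_incr.
    split; [apply sqrt_pos|]. apply Rmult_le_reg_l with a; lra.
  - rewrite <- (pow2_sqrt K) by lra. apply pow_incr.
    split; [apply Rlt_le, Rdiv_lt_0_compat; lra|]. apply Rmult_le_reg_l with a; lra.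
Qed.

End Function.

End OpenInterval.

Theorem theorem1 (lo hi : Rbar) (f : R -> R) :
  Rbar_lt lo hi ->
  C3_on (in_open_interval lo hi) f ->
  (forall x, in_open_interval lo hi x -> 0 < Derive_n f 2 x) ->
  (quadratic_on (in_open_interval lo hi) f <->
   conditionA (in_open_interval lo hi) f).
Proof.
  intros Hlh [Hdn _] Hconv.
  assert (D1 : forall x, in_open_interval lo hi x -> ex_derive f x)
    by (intros x Ix; exact (Hdn 1%nat ltac:(lia) x Ix)).
  assert (D2 : forall x, in_open_interval lo hi x -> ex_derive (Derive f) x)
    by (intros x Ix; exact (Hdn 2%nat ltac:(lia) x Ix)).
  assert (D3 : forall x, in_open_interval lo hi x -> ex_derive (Derive (Derive f)) x)
    by (intros x Ix; exact (Hdn 3%nat ltac:(lia) x Ix)).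
  pose proof (in_open_interval_inhabited lo hi Hlh) as Hne.
  split.
  - exact (conditionA_of_quadratic lo hi f D1 D2 Hconv Hne).
  - intros HA.
    destruct (conditionA_constant_curvature lo hi f D1 D2 Hconv D3 HA) as [M HM].
    exact (quadratic_of_second_derivative_const lo hi f D1 D2 M Hne HM).
Qed.
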